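(* Assume $V$ satisfies Assumptions A1 and A2, let $\delta$ satisfy the step-size condition (S), and let $c=(1-\gamma\delta/2)/(1-\gamma\delta)$. For the underdamped Langevin algorithm with step size $\delta$, let $\tau_k=(1-\gamma\delta)\rho_k-\delta\nabla V(\xi_k)$. Then there exist constants $\varepsilon=\varepsilon(\delta)>0$ and $C_1=C_1(\delta)>0$ such that for all $k\ge0$ (almost surely), \[ \Gamma_c(\xi_{k+1},\tau_k)\le(1-\varepsilon\gamma\delta)\,\Gamma_c(\xi_k,\rho_k)+C_1 . \]
   Context: Fix integers $r\ge1$ and a constant $\gamma>0$. A map has polynomial growth if $\Vert\phi(x)\Vert\le C(1+\Vert x\Vert^m)$ for some $C>0$, integer $m\ge0$ and all $x$; $\mathscr{C}^\infty_{poly}$ denotes infinitely differentiable maps with the map and all derivatives of polynomial growth. Norms of matrices are operator norms. Assumption A1: (a) $V(x)\ge0$ for all $x\in\mathbb{R}^r$; (b) $\Vert\nabla^2V(x)\Vert\le\nu$ for some constant $\nu>0$ and all $x$; (c) $V\in\mathscr{C}^\infty_{poly}$. Assumption A2: there exist constants $\alpha>0$ and $0<\beta<1$ such that for all $x\in\mathbb{R}^r$, $\frac12\langle\nabla V(x),x\rangle\ge\beta V(x)+\gamma^2C_\beta\Vert x\Vert^2-\alpha$, where $C_\beta=\frac{\beta(2-\beta)}{8(1-\beta)}$. Step-size condition (S): $0<\delta\le\min\{1/\gamma,\ \gamma/(2\nu),\ (D+1-\sqrt{D^2+1})/\gamma\}$ with $D=\gamma^4C_\beta/\nu^2$. Underdamped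 Langevin algorithm: $\xi_{k+1}=\xi_k+\delta\rho_k$, $\rho_{k+1}=(1-\gamma\delta)\rho_k-\delta\nabla V(\xi_k)+\sqrt{2\gamma\delta}\,\eta_k$, where $\eta_0,\eta_1,\dots$ are i.i.d. $N(0,I_r)$ and $\eta_k$ is independent of $(\xi_j,\rho_j)_{j\le k}$; the initial values $\xi_0,\rho_0$ are deterministic. For $c>1$ and $x,y\in\mathbb{R}^r$, $\Gamma_c(x,y)=\frac{\gamma^2}{4}\Vert x\Vert^2+V(x)+\frac{\gamma}{2}\langle x,y\rangle+\frac c2\Vert y\Vert^2+1$. *)

From Stdlib Require Import Reals Lra List.
Import ListNotations.
Open Scope R_scope.

(* Vectors of R^r are represented as functions nat -> R of which only the
   coordinates 0..r-1 are meaningful; all norms/inner products below only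
   look at these coordinates. *)
Definition vec := nat -> R.

Fixpoint rsum (n : nat) (f : nat -> R) : R :=
  match n with O => 0 | S m => rsum m f + f m end.

Definition dot (r : nat) (x y : vec) : R := rsum r (fun i => x i * y i).
Definition norm (r : nat) (x : vec) : R := sqrt (dot r x x).
Definition vadd (x y : vec) : vec := fun i => x i + y i.
Definition vsub (x y : vec) : vec := fun i => x i - y i.
Definition vscale (a : R) (x : vec) : vec := fun i => a * x i.

Definition has_gradient (r : nat) (f : vec -> R) (g : vec -> vec) : Prop :=
  forall x eps, 0 < eps -> exists d, 0 < d /\
    forall y, norm r (vsub y x) < d ->
      Rabs (f y - f x - dot r (g x) (vsub y x)) <= eps * norm r (vsub y x).

(* D is the family of all iterated partial derivatives of f:
   D [] = f and D (i :: l) = d/dx_i (D l), each D l being differentiable.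
   Hence f is infinitely differentiable. *)
Definition smooth_family (r : nat) (f : vec -> R) (D : list nat -> vec -> R) : Prop :=
  D [] = f /\ forall l, has_gradient r (D l) (fun x i => D (i :: l) x).

Definition poly_growth (r : nat) (g : vec -> R) : Prop :=
  exists (C : R) (m : nat), 0 < C /\ forall x, Rabs (g x) <= C * (1 + norm r x ^ m).

Definition Cinf_poly (r : nat) (f : vec -> R) (D : list nat -> vec -> R) : Prop :=
  smooth_family r f D /\
  forall l, Forall (fun i => (i < r)%nat) l -> poly_growth r (D l).

Definition grad (D : list nat -> vec -> R) (x : vec) : vec := fun i => D [i] x.

Definition hess_app (r : nat) (D : list nat -> vec -> R) (x u : vec) : vec :=
  fun i => rsum r (fun j => D [i; j] x * u j).

Definition AssumptionA1 (r : nat) (V : vec -> R) (D : list nat -> vec -> R) (nu : R) : Prop :=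
  (forall x, 0 <= V x) /\
  (0 < nu /\ forall x u, norm r (hess_app r D x u) <= nu * norm r u) /\
  Cinf_poly r V D.

Definition Cbeta (beta : R) : R := beta * (2 - beta) / (8 * (1 - beta)).

Definition AssumptionA2 (r : nat) (V : vec -> R) (D : list nat -> vec -> R)
    (gamma alpha beta : R) : Prop :=
  0 < alpha /\ 0 < beta < 1 /\
  forall x, / 2 * dot r (grad D x) x >=
            beta * V x + gamma ^ 2 * Cbeta beta * norm r x ^ 2 - alpha.

Definition step_cond (gamma nu beta delta : R) : Prop :=
  let Dc := gamma ^ 4 * Cbeta beta / nu ^ 2 in
  0 < delta /\ delta <= / gamma /\ delta <= gamma / (2 * nu) /\
  delta <= (Dc + 1 - sqrt (Dc ^ 2 + 1)) / gamma.

(* Underdamped Langevin trajectory for a noise realization eta. *)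
Fixpoint uld (D : list nat -> vec -> R) (gamma delta : R) (xi0 rho0 : vec)
    (eta : nat -> vec) (k : nat) : vec * vec :=
  match k with
  | O => (xi0, rho0)
  | S j =>
      let (xi, rho) := uld D gamma delta xi0 rho0 eta j in
      (vadd xi (vscale delta rho),
       fun i => (1 - gamma * delta) * rho i - delta * grad D xi i
                + sqrt (2 * gamma * delta) * eta j i)
  end.

Definition Gamma (r : nat) (V : vec -> R) (gamma c : R) (x y : vec) : R :=
  gamma ^ 2 / 4 * norm r x ^ 2 + V x + gamma / 2 * dot r x y
  + c / 2 * norm r y ^ 2 + 1.

From Stdlib Require Import Reals Lra List FunctionalExtensionality.
Import ListNotations.
Open Scope R_scope.

(* With [a = gamma delta] and [c (1 - a) = 1 - a/2], one step of the scheme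
   changes the Lyapunov function by an exact identity in which the cross terms
   [<x, rho>] and [<grad V, rho>] cancel:
     Gamma(xi + delta rho, tau) = Gamma(xi, rho) + [Taylor remainder of V]
        - (c - 1 + a/2)/2 |rho|^2 - a/2 <grad V, xi> + c delta^2/2 |grad V|^2.
   The Taylor remainder is at most nu delta^2/2 |rho|^2 (Hessian bound), the
   drift term is controlled by A2, and |grad V(xi)|^2 grows at most
   quadratically (grad V is nu-Lipschitz).  The step-size condition makes the
   resulting negative terms dominate a fixed fraction of Gamma. *)

Lemma rsum_ext n f g : (forall i, f i = g i) -> rsum n f = rsum n g.
Proof. intros H; induction n; simpl; [reflexivity | rewrite IHn, H; reflexivity]. Qed.

Lemma rsum_add n f g : rsum n (fun i => f i + g i) = rsum n f + rsum n g.
Proof. induction n; simpl; [ring | rewrite IHn; ring]. Qed.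

Lemma rsum_sub n f g : rsum n (fun i => f i - g i) = rsum n f - rsum n g.
Proof. induction n; simpl; [ring | rewrite IHn; ring]. Qed.

Lemma rsum_scal n a f : rsum n (fun i => a * f i) = a * rsum n f.
Proof. induction n; simpl; [ring | rewrite IHn; ring]. Qed.

Lemma rsum_swap n m (f : nat -> nat -> R) :
  rsum n (fun j => rsum m (fun i => f i j)) = rsum m (fun i => rsum n (fun j => f i j)).
Proof.
  induction n; simpl.
  - induction m; simpl; [reflexivity | rewrite <- IHm; ring].
  - rewrite IHn, <- rsum_add. reflexivity.
Qed.

Lemma dot_comm r x y : dot r x y = dot r y x.
Proof. apply rsum_ext; intros; ring. Qed.

Lemma dot_vadd_l r x y z : dot r (vadd x y) z = dot r x z + dot r y z.
Proof. unfold dot, vadd. rewrite <- rsum_add. apply rsum_ext; intros; ring. Qed.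

Lemma dot_vadd_r r x y z : dot r z (vadd x y) = dot r z x + dot r z y.
Proof. unfold dot, vadd. rewrite <- rsum_add. apply rsum_ext; intros; ring. Qed.

Lemma dot_vsub_l r x y z : dot r (vsub x y) z = dot r x z - dot r y z.
Proof. unfold dot, vsub. rewrite <- rsum_sub. apply rsum_ext; intros; ring. Qed.

Lemma dot_vsub_r r x y z : dot r z (vsub x y) = dot r z x - dot r z y.
Proof. unfold dot, vsub. rewrite <- rsum_sub. apply rsum_ext; intros; ring. Qed.

Lemma dot_vscale_l r a x y : dot r (vscale a x) y = a * dot r x y.
Proof. unfold dot, vscale. rewrite <- rsum_scal. apply rsum_ext; intros; ring. Qed.

Lemma dot_vscale_r r a x y : dot r x (vscale a y) = a * dot r x y.
Proof. unfold dot, vscale. rewrite <- rsum_scal. apply rsum_ext; intros; ring. Qed.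

Lemma dot_self_nonneg r x : 0 <= dot r x x.
Proof. unfold dot; induction r; simpl; [lra | nra]. Qed.

Lemma norm_sqr_dot r x : norm r x ^ 2 = dot r x x.
Proof. unfold norm. rewrite pow2_sqrt; [reflexivity | apply dot_self_nonneg]. Qed.

Lemma norm_nonneg r x : 0 <= norm r x.
Proof. apply sqrt_pos. Qed.

Lemma norm_vscale r a x : norm r (vscale a x) = Rabs a * norm r x.
Proof.
  unfold norm. rewrite dot_vscale_l, dot_vscale_r.
  replace (a * (a * dot r x x)) with (a² * dot r x x) by (unfold Rsqr; ring).
  rewrite sqrt_mult_alt by apply Rle_0_sqr. rewrite sqrt_Rsqr_abs. reflexivity.
Qed.

Lemma dot_young r x y s : 0 < s -> 2 * dot r x y <= s * dot r x x + / s * dot r y y.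
Proof.
  intros Hs.
  assert (Hsq : 0 <= dot r (vsub (vscale s x) y) (vsub (vscale s x) y))
    by apply dot_self_nonneg.
  rewrite dot_vsub_l, !dot_vsub_r, !dot_vscale_l, !dot_vscale_r, (dot_comm r y x) in Hsq.
  apply Rmult_le_reg_l with s; [exact Hs |].
  replace (s * (s * dot r x x + / s * dot r y y))
    with (s * (s * dot r x x) + dot r y y) by (field; lra).
  lra.
Qed.

Lemma dot_sqr_le_of_norm_le r x y k :
  0 <= k -> norm r x <= k * norm r y -> dot r x x <= k ^ 2 * dot r y y.
Proof.
  intros Hk Hxy. rewrite <- !norm_sqr_dot.
  replace (k ^ 2 * norm r y ^ 2) with ((k * norm r y) ^ 2) by ring.
  apply pow_incr. split; [apply norm_nonneg | exact Hxy].
Qed.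

Lemma Gamma_step r V gamma delta c x p g :
  c * (1 - gamma * delta) = 1 - gamma * delta / 2 ->
  Gamma r V gamma c (vadd x (vscale delta p))
    (vsub (vscale (1 - gamma * delta) p) (vscale delta g))
  = Gamma r V gamma c x p
    + (V (vadd x (vscale delta p)) - V x - delta * dot r g p)
    - (c - 1 + gamma * delta / 2) / 2 * dot r p p
    - gamma * delta / 2 * dot r g x
    + c * delta ^ 2 / 2 * dot r g g.
Proof.
  intros Hc.
  assert (Ha : 1 - gamma * delta <> 0).
  { intros H0. rewrite H0 in Hc. lra. }
  replace c with ((1 - gamma * delta / 2) / (1 - gamma * delta)) by (rewrite <- Hc; field; exact Ha).
  unfold Gamma. rewrite !norm_sqr_dot.
  rewrite ?dot_vadd_l, ?dot_vadd_r, ?dot_vsub_l, ?dot_vsub_r, ?dot_vscale_l, ?dot_vscale_r.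
  rewrite (dot_comm r p x), (dot_comm r p g), (dot_comm r x g).
  field. exact Ha.
Qed.

Lemma Gamma_le r V gamma c x p : 0 < gamma ->
  Gamma r V gamma c x p
  <= gamma ^ 2 / 2 * norm r x ^ 2 + V x + (c / 2 + / 4) * norm r p ^ 2 + 1.
Proof.
  intros Hg. unfold Gamma. rewrite !norm_sqr_dot.
  assert (Hxp := dot_young r x p gamma Hg).
  apply Rmult_le_compat_l with (r := gamma / 4) in Hxp; [| lra].
  replace (gamma / 4 * (gamma * dot r x x + / gamma * dot r p p))
    with (gamma ^ 2 / 4 * dot r x x + / 4 * dot r p p) in Hxp by (field; lra).
  lra.
Qed.

Lemma taylor2_upper (f f' f'' : R -> R) (M : R) :
  (forall t, derivable_pt_lim f t (f' t)) ->
  (forall t, derivable_pt_lim f' t (f'' t)) ->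
  (forall t, f'' t <= M) ->
  f 1 <= f 0 + f' 0 + M / 2.
Proof.
  intros Hf Hf' HM.
  set (phi := fun t => f t - f' 0 * id t - M / 2 * Rsqr t).
  assert (Hphi : forall t, derivable_pt_lim phi t (f' t - f' 0 * 1 - M / 2 * (2 * t))).
  { intros t.
    exact (derivable_pt_lim_minus _ _ _ _ _
             (derivable_pt_lim_minus _ _ _ _ _ (Hf t)
                (derivable_pt_lim_scal _ (f' 0) _ _ (derivable_pt_lim_id t)))
             (derivable_pt_lim_scal _ (M / 2) _ _ (derivable_pt_lim_Rsqr t))). }
  destruct (MVT_cor2 phi _ 0 1 Rlt_0_1 (fun t _ => Hphi t)) as [s [Hs Hs01]].
  destruct (MVT_cor2 f' f'' 0 s (proj1 Hs01) (fun t _ => Hf' t)) as [u [Hu _]].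
  specialize (HM u).
  unfold phi, id, Rsqr in Hs.
  nra.
Qed.

Definition line (x u : vec) (t : R) : vec := vadd x (vscale t u).

Lemma line_0 x u : line x u 0 = x.
Proof. apply functional_extensionality; intro; unfold line, vadd, vscale; ring. Qed.

Lemma line_1 x u : line x u 1 = vadd x u.
Proof. apply functional_extensionality; intro; unfold line, vadd, vscale; ring. Qed.

Lemma derivable_pt_lim_line r F G x u t : has_gradient r F G ->
  derivable_pt_lim (fun s => F (line x u s)) t (dot r (G (line x u t)) u).
Proof.
  intros HG eps Heps.
  set (n := norm r u). assert (Hn : 0 <= n) by apply norm_nonneg.
  destruct (HG (line x u t) (eps / (2 * (n + 1)))) as [d [Hd Hy]].
  { apply Rdiv_lt_0_compat; lra. }
  assert (Hdn : 0 < d / (n + 1)) by (apply Rdiv_lt_0_compat; lra).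
  exists (mkposreal _ Hdn). simpl. intros h Hh0 Hh.
  assert (Hstep : vsub (line x u (t + h)) (line x u t) = vscale h u).
  { apply functional_extensionality; intro; unfold vsub, line, vadd, vscale; ring. }
  specialize (Hy (line x u (t + h))).
  rewrite Hstep, norm_vscale, dot_vscale_r in Hy. fold n in Hy.
  assert (Hah : 0 < Rabs h) by (apply Rabs_pos_lt; exact Hh0).
  assert (Hlt : Rabs h * n < d).
  { apply Rmult_lt_compat_r with (r := n + 1) in Hh; [| lra].
    unfold Rdiv in Hh. rewrite Rmult_assoc, Rinv_l in Hh by lra. nra. }
  specialize (Hy Hlt).
  replace ((F (line x u (t + h)) - F (line x u t)) / h - dot r (G (line x u t)) u)
    with ((F (line x u (t + h)) - F (line x u t) - h * dot r (G (line x u t)) u) / h)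
    by (field; exact Hh0).
  unfold Rdiv at 1. rewrite Rabs_mult, Rabs_inv.
  apply Rmult_le_compat_r with (r := / Rabs h) in Hy; [| left; apply Rinv_0_lt_compat; exact Hah].
  eapply Rle_lt_trans; [exact Hy |].
  replace (eps / (2 * (n + 1)) * (Rabs h * n) * / Rabs h)
    with (eps * n / (2 * (n + 1))) by (field; lra).
  apply Rmult_lt_reg_r with (r := 2 * (n + 1)); [lra |].
  unfold Rdiv. rewrite Rmult_assoc, Rinv_l by lra. nra.
Qed.

Lemma derivable_pt_lim_rsum n (f : nat -> R -> R) (f' : nat -> R) t :
  (forall j, derivable_pt_lim (f j) t (f' j)) ->
  derivable_pt_lim (fun s => rsum n (fun j => f j s)) t (rsum n f').
Proof.
  intros H. induction n; simpl.
  - exact (derivable_pt_lim_const 0 t).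
  - exact (derivable_pt_lim_plus _ _ _ _ _ IHn (H n)).
Qed.

Section SmoothPotential.

Variables (r : nat) (V : vec -> R) (D : list nat -> vec -> R) (nu : R).
Hypothesis HA1 : AssumptionA1 r V D nu.

Lemma smooth_V : smooth_family r V D.
Proof. apply HA1. Qed.

Lemma nu_pos : 0 < nu.
Proof. apply HA1. Qed.

Lemma derivable_pt_lim_V_line x u t :
  derivable_pt_lim (fun s => V (line x u s)) t (dot r (grad D (line x u t)) u).
Proof.
  destruct smooth_V as [H0 HD]. rewrite <- H0.
  exact (derivable_pt_lim_line r (D []) _ x u t (HD [])).
Qed.

Lemma derivable_pt_lim_grad_line x u w t :
  derivable_pt_lim (fun s => dot r (grad D (line x u s)) w) t
    (dot r u (hess_app r D (line x u t) w)).
Proof.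
  destruct smooth_V as [_ HD].
  replace (dot r u (hess_app r D (line x u t) w))
    with (rsum r (fun j => w j * dot r (fun i => D [i; j] (line x u t)) u)).
  - apply derivable_pt_lim_rsum. intros j.
    apply (derivable_pt_lim_ext (mult_real_fct (w j) (fun s => grad D (line x u s) j)));
      [intros; unfold mult_real_fct; ring |].
    apply derivable_pt_lim_scal.
    exact (derivable_pt_lim_line r (D [j]) (fun y i => D [i; j] y) x u t (HD [j])).
  - unfold dot, hess_app.
    transitivity (rsum r (fun j => rsum r (fun i => u i * (D [i; j] (line x u t) * w j)))).
    + apply rsum_ext; intro j. rewrite <- rsum_scal. apply rsum_ext; intro; ring.
    + rewrite rsum_swap. apply rsum_ext; intro i. rewrite <- rsum_scal. reflexivity.
Qed.

Lemma dot_hess_young y u w s : 0 < s ->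
  2 * dot r u (hess_app r D y w) <= s * dot r u u + / s * nu ^ 2 * dot r w w.
Proof.
  intros Hs. destruct HA1 as [_ [[Hnu HH] _]].
  assert (Hh := dot_sqr_le_of_norm_le r _ _ _ (Rlt_le _ _ Hnu) (HH y w)).
  assert (0 < / s) by (apply Rinv_0_lt_compat; exact Hs).
  pose proof (dot_young r u (hess_app r D y w) s Hs). nra.
Qed.

Lemma descent_lemma x u :
  V (vadd x u) <= V x + dot r (grad D x) u + nu / 2 * dot r u u.
Proof.
  assert (Hnu := nu_pos).
  assert (Htaylor := taylor2_upper (fun s => V (line x u s))
    (fun s => dot r (grad D (line x u s)) u) _ (nu * dot r u u)
    (derivable_pt_lim_V_line x u) (derivable_pt_lim_grad_line x u u)).
  cbv beta in Htaylor. rewrite line_0, line_1 in Htaylor.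
  enough (Hbound : forall t, dot r u (hess_app r D (line x u t) u) <= nu * dot r u u)
    by (specialize (Htaylor Hbound); lra).
  intros t. pose proof (dot_hess_young (line x u t) u u nu Hnu) as Hh.
  replace (/ nu * nu ^ 2) with nu in Hh by (field; lra). lra.
Qed.

Lemma grad_lipschitz x y :
  dot r (vsub (grad D y) (grad D x)) (vsub (grad D y) (grad D x))
  <= nu ^ 2 * dot r (vsub y x) (vsub y x).
Proof.
  assert (Hnu := nu_pos).
  set (u := vsub y x). set (e := vsub (grad D y) (grad D x)).
  assert (Hy : line x u 1 = y).
  { rewrite line_1. apply functional_extensionality; intro; unfold u, vadd, vsub; ring. }
  destruct (MVT_cor2 _ _ 0 1 Rlt_0_1 (fun t _ => derivable_pt_lim_grad_line x u e t))
    as [s [Hs _]].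
  rewrite Hy, line_0, <- dot_vsub_l in Hs. fold e in Hs.
  assert (Hb := dot_hess_young (line x u s) u e (nu ^ 2) ltac:(apply pow_lt; lra)).
  replace (/ nu ^ 2 * nu ^ 2) with 1 in Hb by (field; lra).
  nra.
Qed.

Definition origin : vec := fun _ => 0.

(* Young with weight 2 rather than 1: the drift bound then needs only three
   quarters of the [|x|^2] gain provided by A2. *)
Lemma grad_sqr_growth x :
  dot r (grad D x) (grad D x)
  <= 3 * dot r (grad D origin) (grad D origin) + 3 / 2 * nu ^ 2 * dot r x x.
Proof.
  set (g0 := grad D origin). set (e := vsub (grad D x) g0).
  assert (He := grad_lipschitz origin x). fold g0 e in He.
  replace (dot r (vsub x origin) (vsub x origin)) with (dot r x x) in He
    by (apply rsum_ext; intro; unfold vsub, origin; ring).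
  replace (grad D x) with (vadd g0 e)
    by (apply functional_extensionality; intro; unfold vadd, e, vsub; ring).
  rewrite !dot_vadd_l, !dot_vadd_r, (dot_comm r e g0).
  pose proof (dot_young r g0 e 2 ltac:(lra)).
  lra.
Qed.

End SmoothPotential.

Lemma Cbeta_pos beta : 0 < beta < 1 -> 0 < Cbeta beta.
Proof. intros Hb. unfold Cbeta. apply Rdiv_lt_0_compat; [apply Rmult_lt_0_compat |]; lra. Qed.

(* [d + 1 - sqrt (d^2 + 1)] is the smaller root of [a^2/2 - (d + 1) a + d]. *)
Lemma below_small_root d a : 0 < d -> a <= d + 1 - sqrt (d ^ 2 + 1) ->
  a < 1 /\ a * (1 - a / 2) <= d * (1 - a).
Proof.
  intros Hd Ha.
  set (w := sqrt (d ^ 2 + 1)) in *.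
  assert (Hw2 : w * w = d ^ 2 + 1) by (apply sqrt_sqrt; nra).
  assert (Hw : 0 <= w) by apply sqrt_pos.
  assert (Hdw : d < w) by nra.
  split; [lra |].
  assert (0 <= (d + 1 - w - a) * (d + 1 + w - a)) by (apply Rmult_le_pos; lra).
  nra.
Qed.

Section LangevinStep.

Variables (r : nat) (gamma : R) (V : vec -> R) (D : list nat -> vec -> R)
  (nu alpha beta delta : R).
Hypothesis Hgamma : 0 < gamma.
Hypothesis HA1 : AssumptionA1 r V D nu.
Hypothesis HA2 : AssumptionA2 r V D gamma alpha beta.
Hypothesis Hstep : step_cond gamma nu beta delta.

Let c := (1 - gamma * delta / 2) / (1 - gamma * delta).

Lemma Cbeta_beta_pos : 0 < Cbeta beta.
Proof. apply Cbeta_pos, HA2. Qed.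

Lemma step_small_root :
  0 < gamma * delta < 1 /\
  gamma * delta * (1 - gamma * delta / 2)
  <= gamma ^ 4 * Cbeta beta / nu ^ 2 * (1 - gamma * delta).
Proof.
  assert (Hnu := nu_pos r V D nu HA1). assert (HC := Cbeta_beta_pos).
  destruct Hstep as [Hd [_ [_ Hroot]]].
  assert (HD : 0 < gamma ^ 4 * Cbeta beta / nu ^ 2).
  { apply Rdiv_lt_0_compat; [apply Rmult_lt_0_compat |]; try apply pow_lt; lra. }
  apply Rmult_le_compat_l with (r := gamma) in Hroot; [| lra].
  replace (gamma * (_ / gamma)) with (gamma ^ 4 * Cbeta beta / nu ^ 2 + 1
    - sqrt ((gamma ^ 4 * Cbeta beta / nu ^ 2) ^ 2 + 1)) in Hroot by (field; lra).
  destruct (below_small_root _ _ HD Hroot).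
  repeat split; try lra. apply Rmult_lt_0_compat; lra.
Qed.

Lemma gamma_delta_bounds : 0 < gamma * delta < 1.
Proof. apply step_small_root. Qed.

Lemma c_spec : c * (1 - gamma * delta) = 1 - gamma * delta / 2.
Proof. assert (H := gamma_delta_bounds). unfold c. field. lra. Qed.

Lemma c_ge : 1 + gamma * delta / 2 <= c.
Proof.
  assert (H := gamma_delta_bounds). assert (Hc := c_spec).
  apply Rmult_le_reg_r with (r := 1 - gamma * delta); nra.
Qed.

Lemma nu_delta_le : nu * delta <= gamma / 2.
Proof.
  assert (Hnu := nu_pos r V D nu HA1). destruct Hstep as [_ [_ [Hd _]]].
  apply Rmult_le_compat_l with (r := nu) in Hd; [| lra].
  replace (nu * (gamma / (2 * nu))) with (gamma / 2) in Hd by (field; lra). exact Hd.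
Qed.

Lemma grad_coef_le :
  c * delta ^ 2 * nu ^ 2 <= gamma * delta * gamma ^ 2 * Cbeta beta.
Proof.
  assert (Hnu := nu_pos r V D nu HA1). assert (Ha := gamma_delta_bounds).
  destruct step_small_root as [_ Hroot].
  assert (Hca : c * (gamma * delta) <= gamma ^ 4 * Cbeta beta / nu ^ 2).
  { apply Rmult_le_reg_r with (r := 1 - gamma * delta); [lra |].
    replace (c * (gamma * delta) * (1 - gamma * delta))
      with (gamma * delta * (1 - gamma * delta / 2)) by (rewrite <- c_spec; ring).
    exact Hroot. }
  assert (Hd : 0 < delta) by apply Hstep.
  apply Rmult_le_compat_r with (r := delta * nu ^ 2 / gamma) in Hca;
    [| apply Rlt_le, Rdiv_lt_0_compat; [apply Rmult_lt_0_compat; [| apply pow_lt] |]; lra].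
  replace (c * (gamma * delta) * (delta * nu ^ 2 / gamma))
    with (c * delta ^ 2 * nu ^ 2) in Hca by (field; lra).
  replace (gamma ^ 4 * Cbeta beta / nu ^ 2 * (delta * nu ^ 2 / gamma))
    with (gamma * delta * gamma ^ 2 * Cbeta beta) in Hca by (field; lra).
  exact Hca.
Qed.

Lemma one_step_drift x p :
  Gamma r V gamma c (vadd x (vscale delta p))
    (vsub (vscale (1 - gamma * delta) p) (vscale delta (grad D x)))
  <= Gamma r V gamma c x p
     - gamma * delta / 4 * norm r p ^ 2 - gamma * delta * beta * V x
     - gamma * delta * gamma ^ 2 * Cbeta beta / 4 * norm r x ^ 2
     + gamma * delta * alpha
     + 3 / 2 * c * delta ^ 2 * dot r (grad D origin) (grad D origin).
Proof.
  assert (Ha := gamma_delta_bounds). assert (Hc := c_ge).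
  assert (Hnd := nu_delta_le). assert (Hcoef := grad_coef_le).
  assert (Hd : 0 < delta) by apply Hstep.
  rewrite (Gamma_step r V gamma delta c x p (grad D x) c_spec), !norm_sqr_dot.
  assert (Hdesc := descent_lemma r V D nu HA1 x (vscale delta p)).
  rewrite dot_vscale_l, !dot_vscale_r in Hdesc.
  destruct HA2 as [_ [_ Hdrift]]. specialize (Hdrift x). rewrite norm_sqr_dot in Hdrift.
  assert (Hgrad := grad_sqr_growth r V D nu HA1 x).
  set (P := dot r p p) in *. set (X := dot r x x) in *.
  set (G := dot r (grad D x) (grad D x)) in *.
  set (G0 := dot r (grad D origin) (grad D origin)) in *.
  assert (HP : 0 <= P) by apply dot_self_nonneg.
  assert (HX : 0 <= X) by apply dot_self_nonneg.
  assert (Hrem : nu / 2 * (delta * (delta * P)) <= gamma * delta / 4 * P).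
  { apply Rmult_le_compat_r with (r := delta * P / 2) in Hnd; [| apply Rmult_le_pos; nra].
    lra. }
  assert (Hkin : gamma * delta / 2 * P <= (c - 1 + gamma * delta / 2) / 2 * P)
    by (apply Rmult_le_compat_r; lra).
  assert (Hpot : gamma * delta * (beta * V x + gamma ^ 2 * Cbeta beta * X - alpha)
                 <= gamma * delta / 2 * dot r (grad D x) x)
    by (replace (gamma * delta / 2 * dot r (grad D x) x)
          with (gamma * delta * (/ 2 * dot r (grad D x) x)) by field;
        apply Rmult_le_compat_l; lra).
  assert (HG : c * delta ^ 2 / 2 * G
               <= 3 / 2 * c * delta ^ 2 * G0 + 3 / 4 * (c * delta ^ 2 * nu ^ 2) * X).
  { apply Rmult_le_compat_l with (r := c * delta ^ 2 / 2) in Hgrad; [lra |].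
    apply Rmult_le_pos; [apply Rmult_le_pos; [lra | apply pow2_ge_0] | lra]. }
  assert (HGX : c * delta ^ 2 * nu ^ 2 * X <= gamma * delta * gamma ^ 2 * Cbeta beta * X)
    by (apply Rmult_le_compat_r; lra).
  lra.
Qed.

Lemma Gamma_absorb eps x p :
  0 < eps -> eps <= Cbeta beta / 2 -> eps <= beta -> eps * (2 * c + 1) <= 1 ->
  eps * (gamma * delta) * Gamma r V gamma c x p
  <= gamma * delta / 4 * norm r p ^ 2 + gamma * delta * beta * V x
     + gamma * delta * gamma ^ 2 * Cbeta beta / 4 * norm r x ^ 2 + eps * (gamma * delta).
Proof.
  intros He HeC Heb Hec.
  assert (Ha := gamma_delta_bounds).
  assert (HV : 0 <= V x) by apply HA1.
  assert (HX := pow2_ge_0 (norm r x)). assert (HP := pow2_ge_0 (norm r p)).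
  assert (Hea : 0 <= eps * (gamma * delta)) by nra.
  assert (HG := Gamma_le r V gamma c x p Hgamma).
  apply Rmult_le_compat_l with (r := eps * (gamma * delta)) in HG; [| exact Hea].
  eapply Rle_trans; [exact HG |].
  assert (gamma * delta * (gamma ^ 2 * eps) * norm r x ^ 2
          <= gamma * delta * (gamma ^ 2 * (Cbeta beta / 2)) * norm r x ^ 2).
  { apply Rmult_le_compat_r; [exact HX |].
    apply Rmult_le_compat_l; [lra |]. apply Rmult_le_compat_l; [apply pow2_ge_0 | lra]. }
  assert (gamma * delta * eps * V x <= gamma * delta * beta * V x).
  { apply Rmult_le_compat_r; [exact HV |]. apply Rmult_le_compat_l; lra. }
  assert (gamma * delta * (eps * (2 * c + 1)) * norm r p ^ 2 <= gamma * delta * norm r p ^ 2).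
  { apply Rmult_le_compat_r; [exact HP |]. nra. }
  lra.
Qed.

Lemma one_step_contraction : exists eps C1 : R, 0 < eps /\ 0 < C1 /\
  forall x p,
    Gamma r V gamma c (vadd x (vscale delta p))
      (vsub (vscale (1 - gamma * delta) p) (vscale delta (grad D x)))
    <= (1 - eps * gamma * delta) * Gamma r V gamma c x p + C1.
Proof.
  assert (Ha := gamma_delta_bounds). assert (Hc := c_ge).
  assert (HC := Cbeta_beta_pos). assert (Hb : 0 < beta) by apply HA2.
  assert (Hal : 0 < alpha) by apply HA2.
  set (eps := Rmin (Rmin (Cbeta beta / 2) beta) (/ (2 * c + 1))).
  assert (He0 : 0 < eps).
  { apply Rmin_glb_lt; [apply Rmin_glb_lt |]; try lra. apply Rinv_0_lt_compat; lra. }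
  assert (HeC : eps <= Cbeta beta / 2) by (eapply Rle_trans; [apply Rmin_l | apply Rmin_l]).
  assert (Heb : eps <= beta) by (eapply Rle_trans; [apply Rmin_l | apply Rmin_r]).
  assert (Hec : eps * (2 * c + 1) <= 1).
  { assert (Hinv : eps <= / (2 * c + 1)) by apply Rmin_r.
    apply Rmult_le_compat_r with (r := 2 * c + 1) in Hinv; [| lra].
    rewrite Rinv_l in Hinv by lra. exact Hinv. }
  set (G0 := dot r (grad D origin) (grad D origin)).
  assert (HG0 : 0 <= G0) by apply dot_self_nonneg.
  exists eps, (gamma * delta * (alpha + eps) + 3 / 2 * c * delta ^ 2 * G0).
  split; [exact He0 | split].
  { assert (0 <= c * delta ^ 2 * G0) by (apply Rmult_le_pos; [apply Rmult_le_pos; [lra | apply pow2_ge_0] | exact HG0]).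
    nra. }
  intros x p.
  assert (Hdrift := one_step_drift x p).
  assert (Habsorb := Gamma_absorb eps x p He0 HeC Heb Hec).
  fold G0 in Hdrift. lra.
Qed.

End LangevinStep.

Theorem lemma1 (r : nat) (gamma : R) (V : vec -> R) (D : list nat -> vec -> R)
  (nu alpha beta delta : R) :
  le 1 r -> 0 < gamma ->
  AssumptionA1 r V D nu -> AssumptionA2 r V D gamma alpha beta ->
  step_cond gamma nu beta delta ->
  let c := (1 - gamma * delta / 2) / (1 - gamma * delta) in
  exists eps C1 : R, 0 < eps /\ 0 < C1 /\
    forall (xi0 rho0 : vec) (eta : nat -> vec) (k : nat),
      let xi := fst (uld D gamma delta xi0 rho0 eta k) in
      let rho := snd (uld D gamma delta xi0 rho0 eta k) in
      let xi' := fst (uld D gamma delta xi0 rho0 eta (S k)) in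
      let tau := fun i => (1 - gamma * delta) * rho i - delta * grad D xi i in
      Gamma r V gamma c xi' tau
        <= (1 - eps * gamma * delta) * Gamma r V gamma c xi rho + C1.
Proof.
  intros _ Hg HA1 HA2 HS c.
  destruct (one_step_contraction r gamma V D nu alpha beta delta Hg HA1 HA2 HS)
    as [eps [C1 [He [HC Hone]]]].
  exists eps, C1. split; [exact He | split; [exact HC |]].
  intros xi0 rho0 eta k xi rho xi' tau.
  unfold xi', tau, xi, rho. simpl uld.
  destruct (uld D gamma delta xi0 rho0 eta k) as [x p].
  exact (Hone x p).
Qed.
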